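(* Let $C\ge 2$ and $N\ge 1$ be integers and let $\boldsymbol{h}_{i,c}\in\mathbb{R}^p$ ($1\le i\le N$, $1\le c\le C$) be fixed (not trained) feature vectors, $\boldsymbol{h}_{i,c}$ being the $i$-th example of class $c$. Define the class-means $\boldsymbol{\mu}_c=\frac1N\sum_{i}\boldsymbol{h}_{i,c}$, the global mean $\boldsymbol{\mu}_G=\frac{1}{NC}\sum_{i,c}\boldsymbol{h}_{i,c}$, the total covariance $\boldsymbol{\Sigma}_T=\frac{1}{NC}\sum_{i,c}(\boldsymbol{h}_{i,c}-\boldsymbol{\mu}_G)(\boldsymbol{h}_{i,c}-\boldsymbol{\mu}_G)^\top$, the within-class covariance $\boldsymbol{\Sigma}_W=\frac{1}{NC}\sum_{i,c}(\boldsymbol{h}_{i,c}-\boldsymbol{\mu}_c)(\boldsymbol{h}_{i,c}-\boldsymbol{\mu}_c)^\top$, and the matrix $\dot{\boldsymbol{M}}=[\boldsymbol{\mu}_1-\boldsymbol{\mu}_G,\dots,\boldsymbol{\mu}_C-\boldsymbol{\mu}_G]\in\mathbb{R}^{p\times C}$. Consider the (Webb–Lowe) linear classifier with weights $\boldsymbol{W}\in\mathbb{R}^{C\times p}$ (rows $\boldsymbol{w}_c^\top$) and biases $\boldsymbol{b}=(b_c)\in\mathbb{R}^C$ given by $$\boldsymbol{W}=\tfrac1C\dot{\boldsymbol{M}}^\top\boldsymbol{\Sigma}_T^\dagger,\qquad \boldsymbol{b}=\tfrac1C\mathbf{1}_C-\tfrac1C\dot{\boldsymbol{M}}^\top\boldsymbol{\Sigma}_T^\dagger\boldsymbol{\mu}_G,$$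 where $\dagger$ is the Moore–Penrose pseudoinverse and $\mathbf{1}_C$ the all-ones vector. Assume (i) $\boldsymbol{\Sigma}_W=\mathbf{0}$, and (ii) $\boldsymbol{\mu}_c\neq\boldsymbol{\mu}_G$ for all $c$, $\|\boldsymbol{\mu}_c-\boldsymbol{\mu}_G\|_2=\|\boldsymbol{\mu}_{c'}-\boldsymbol{\mu}_G\|_2$ for all $c,c'$, and, with $\tilde{\boldsymbol{\mu}}_c=(\boldsymbol{\mu}_c-\boldsymbol{\mu}_G)/\|\boldsymbol{\mu}_c-\boldsymbol{\mu}_G\|_2$, $\langle\tilde{\boldsymbol{\mu}}_c,\tilde{\boldsymbol{\mu}}_{c'}\rangle=\frac{C}{C-1}\delta_{c,c'}-\frac{1}{C-1}$ for all $c,c'$. Then (a) $\dfrac{\boldsymbol{W}^\top}{\|\boldsymbol{W}\|_F}=\dfrac{\dot{\boldsymbol{M}}}{\|\dot{\boldsymbol{M}}\|_F}$, and (b) for every $\boldsymbol{h}\in\mathbb{R}^p$, $\arg\max_{c'}\left(\langle\boldsymbol{w}_{c'},\boldsymbol{h}\rangle+b_{c'}\right)=\arg\min_{c'}\|\boldsymbol{h}-\boldsymbol{\mu}_{c'}\|_2$.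
   Context: $\delta_{c,c'}$ is the Kronecker delta and $\|\cdot\|_F$ the Frobenius norm. The classifier above is (by a result of Webb and Lowe) the optimal linear classifier under mean-squared-error loss when the features are fixed; in the claim it is simply the classifier defined by the displayed formulas. The predicted label of a feature $\boldsymbol{h}$ is the index maximizing $\langle\boldsymbol{w}_c,\boldsymbol{h}\rangle+b_c$. *)

From HB Require Import structures.
From mathcomp Require Import all_boot all_order all_algebra.
From Stdlib Require Import ClassicalEpsilon.
Set Implicit Arguments. Unset Strict Implicit. Unset Printing Implicit Defensive.
Import Order.TTheory GRing.Theory Num.Theory.
Local Open Scope ring_scope.

Section Defs.
Variable R : rcfType.

Definition vdot (p : nat) (u v : 'cV[R]_p) : R := (u^T *m v) 0 0.
Definition vnorm (p : nat) (u : 'cV[R]_p) : R := Num.sqrt (vdot u u).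

Definition frob (m n : nat) (A : 'M[R]_(m, n)) : R :=
  Num.sqrt (\sum_(i < m) \sum_(j < n) A i j ^+ 2).

(* Moore--Penrose pseudoinverse: the (unique) X satisfying the four
   Penrose conditions (real case, so conjugate transpose = transpose). *)
Definition is_MP_pinv (m n : nat) (A : 'M[R]_(m, n)) (X : 'M[R]_(n, m)) : Prop :=
  [/\ A *m X *m A = A, X *m A *m X = X,
      (A *m X)^T = A *m X & (X *m A)^T = X *m A].

Definition mp_pinv (m n : nat) (A : 'M[R]_(m, n)) : 'M[R]_(n, m) :=
  epsilon (inhabits 0) (is_MP_pinv A).

Variables (p N C : nat).
Variable h : 'I_N -> 'I_C -> 'cV[R]_p.

Definition class_mean (c : 'I_C) : 'cV[R]_p := (N%:R)^-1 *: \sum_(i < N) h i c.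
Definition global_mean : 'cV[R]_p :=
  ((N * C)%:R)^-1 *: \sum_(i < N) \sum_(c < C) h i c.
Definition SigmaT : 'M[R]_p :=
  ((N * C)%:R)^-1 *: \sum_(i < N) \sum_(c < C)
     ((h i c - global_mean) *m (h i c - global_mean)^T).
Definition SigmaW : 'M[R]_p :=
  ((N * C)%:R)^-1 *: \sum_(i < N) \sum_(c < C)
     ((h i c - class_mean c) *m (h i c - class_mean c)^T).
Definition Mdot : 'M[R]_(p, C) :=
  \matrix_(k < p, c < C) (class_mean c - global_mean) k 0.

Definition WL_W : 'M[R]_(C, p) := (C%:R)^-1 *: (Mdot^T *m mp_pinv SigmaT).
Definition WL_b : 'cV[R]_C :=
  (C%:R)^-1 *: const_mx 1 - (C%:R)^-1 *: (Mdot^T *m mp_pinv SigmaT *m global_mean).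

Definition WL_score (x : 'cV[R]_p) (c : 'I_C) : R :=
  vdot (row c WL_W)^T x + WL_b c 0.

End Defs.

From mathcomp Require Import all_boot all_order all_algebra.
From mathcomp Require Import ring.
From Stdlib Require Import ClassicalEpsilon.
(* Once the within-class covariance vanishes every feature equals its class
   mean, so Sigma_T = M M^T / C with M = Mdot.  The simplex-ETF hypothesis says
   that the Gram matrix M^T M is a I + b J, and the columns of M sum to zero, so
   M (M^T M) = a M: Sigma_T is a multiple of an orthogonal projector, its
   pseudoinverse is an explicit multiple of M M^T, and W = a^-1 M^T.  The score
   of class c is then an increasing affine function of <mu_c - mu_G, h - mu_G>,
   and as the centred means have equal norms, maximising it amounts to
   minimising ||h - mu_c||. *)

Set Implicit Arguments. Unset Strict Implicit. Unset Printing Implicit Defensive.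
Import Order.TTheory GRing.Theory Num.Theory.
Local Open Scope ring_scope.

Section EuclideanGeometry.
Context {R : rcfType}.

Lemma vdotE (p : nat) (u v : 'cV[R]_p) : vdot u v = \sum_k u k 0 * v k 0.
Proof. by rewrite /vdot mxE; apply: eq_bigr => k _; rewrite mxE. Qed.

Lemma trmx_mulmxE (p m n : nat) (A : 'M[R]_(p, m)) (B : 'M[R]_(p, n)) i j :
  (A^T *m B) i j = vdot (col i A) (col j B).
Proof. by rewrite mxE vdotE; apply: eq_bigr => k _; rewrite !mxE. Qed.

Lemma vdotZ (p : nat) (a b : R) (u v : 'cV[R]_p) :
  vdot (a *: u) (b *: v) = a * b * vdot u v.
Proof. by rewrite !vdotE mulr_sumr; apply: eq_bigr => k _; rewrite !mxE; ring. Qed.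

Lemma vdot_ge0 (p : nat) (u : 'cV[R]_p) : 0 <= vdot u u.
Proof. by rewrite vdotE; apply: sumr_ge0 => k _; rewrite -expr2 sqr_ge0. Qed.

Lemma vdot_eq0 (p : nat) (u : 'cV[R]_p) : (vdot u u == 0) = (u == 0).
Proof.
apply/eqP/eqP => [|->]; last by rewrite vdotE big1 // => k _; rewrite mxE mul0r.
rewrite vdotE => /psumr_eq0P u0; apply/matrixP => k j.
have /eqP : u k 0 * u k 0 = 0 by apply: u0 => // i _; rewrite -expr2 sqr_ge0.
by rewrite ord1 mxE -expr2 sqrf_eq0 => /eqP.
Qed.

Lemma sqr_vnorm (p : nat) (u : 'cV[R]_p) : vnorm u ^+ 2 = vdot u u.
Proof. by rewrite sqr_sqrtr // vdot_ge0. Qed.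

Lemma vdot_normalized (p : nat) (u v : 'cV[R]_p) : vnorm u = vnorm v ->
  vdot ((vnorm u)^-1 *: u) ((vnorm v)^-1 *: v) = vdot u v / vdot u u.
Proof. by move=> uv; rewrite vdotZ -uv -invfM -expr2 sqr_vnorm mulrC. Qed.

Lemma vdotBB (p : nat) (y u : 'cV[R]_p) :
  vdot (y - u) (y - u) = vdot y y - 2 * vdot u y + vdot u u.
Proof.
rewrite !vdotE mulr_sumr -sumrB -big_split /=.
by apply: eq_bigr => k _; rewrite !mxE; ring.
Qed.

Lemma ler_vnormB_equinorm (p : nat) (y u v : 'cV[R]_p) : vdot u u = vdot v v ->
  (vnorm (y - u) <= vnorm (y - v)) = (vdot v y <= vdot u y).
Proof.
move=> uv; rewrite ler_sqrt ?vdot_ge0 // !vdotBB uv lerD2r lerD2l lerN2.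
by rewrite ler_pM2l.
Qed.

Lemma sum_outer_eq0 (I : finType) (p : nat) (u : I -> 'cV[R]_p) :
  \sum_i u i *m (u i)^T = 0 -> forall i, u i = 0.
Proof.
move=> /(congr1 mxtrace); rewrite raddf_sum mxtrace0 => sum_tr0 i.
have tr_outer j : \tr (u j *m (u j)^T) = vdot (u j) (u j).
  by rewrite mxtrace_mulC /mxtrace big_ord1.
rewrite (eq_bigr _ (fun j _ => tr_outer j)) in sum_tr0.
by apply/eqP; rewrite -vdot_eq0; apply/eqP/(psumr_eq0P _ sum_tr0) => // j _;
  apply: vdot_ge0.
Qed.

Lemma frob_tr (m n : nat) (A : 'M[R]_(m, n)) : frob A^T = frob A.
Proof.
rewrite /frob exchange_big /=; congr Num.sqrt.
by apply: eq_bigr => i _; apply: eq_bigr => j _; rewrite mxE.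
Qed.

Lemma frobZ (m n : nat) (a : R) (A : 'M[R]_(m, n)) : frob (a *: A) = `|a| * frob A.
Proof.
rewrite /frob -sqrtr_sqr -sqrtrM ?sqr_ge0 // mulr_sumr; congr Num.sqrt.
by apply: eq_bigr => i _; rewrite mulr_sumr; apply: eq_bigr => j _; rewrite mxE exprMn.
Qed.

Lemma frob_normalizeZ (m n : nat) (a : R) (A : 'M[R]_(m, n)) : 0 < a ->
  (frob (a *: A))^-1 *: (a *: A) = (frob A)^-1 *: A.
Proof.
move=> a_gt0; rewrite frobZ gtr0_norm // scalerA invfM mulrAC mulVf ?mul1r //.
by rewrite gt_eqF.
Qed.

End EuclideanGeometry.

Section MoorePenrose.
Context {R : rcfType}.

Lemma is_MP_pinv_unique (m n : nat) (A : 'M[R]_(m, n)) X Y :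
  is_MP_pinv A X -> is_MP_pinv A Y -> X = Y.
Proof.
case=> [AXA XAX AXT XAT] [AYA YAY AYT YAT].
have XE : X = X *m A *m Y.
  have e1 : X = X *m (X^T *m A^T) by rewrite -trmx_mul AXT mulmxA XAX.
  have e2 : A^T = A^T *m (A *m Y) by rewrite -AYT -trmx_mul AYA.
  by rewrite {1}e1 {1}e2 (mulmxA X^T) -trmx_mul AXT !mulmxA XAX.
have YE : Y = X *m A *m Y.
  have f1 : Y = (A^T *m Y^T) *m Y by rewrite -trmx_mul YAT YAY.
  have f2 : A^T = X *m A *m A^T by rewrite -XAT -trmx_mul mulmxA AXA.
  by rewrite {1}f1 {1}f2 -(mulmxA (X *m A)) -trmx_mul YAT -!mulmxA (mulmxA Y) YAY.
by rewrite XE -YE.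
Qed.

Lemma mp_pinvE (m n : nat) (A : 'M[R]_(m, n)) X : is_MP_pinv A X -> mp_pinv A = X.
Proof.
move=> AX; have := epsilon_spec (inhabits 0) (is_MP_pinv A) (ex_intro _ _ AX).
by move/is_MP_pinv_unique; apply.
Qed.

(* [g^-1 *: B] is an orthogonal projector. *)
Lemma is_MP_pinv_scaled_projector (n : nat) (B : 'M[R]_n) (a g : R) :
  B^T = B -> B *m B = g *: B -> a != 0 -> g != 0 ->
  is_MP_pinv (a *: B) ((a * g ^+ 2)^-1 *: B).
Proof.
move=> BT BB a0 g0.
have BBB : B *m B *m B = g ^+ 2 *: B by rewrite BB -scalemxAl BB scalerA.
split; do ![rewrite -scalemxAl | rewrite -scalemxAr | rewrite scalerA].
- by rewrite BBB scalerA; congr (_ *: _); field; rewrite a0 g0.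
- by rewrite BBB scalerA; congr (_ *: _); field; rewrite a0 g0.
- by rewrite BB scalerA linearZ /= BT.
- by rewrite BB scalerA linearZ /= BT.
Qed.

End MoorePenrose.

Lemma mulmx_gram_centered (R : comPzRingType) (p n : nat) (M : 'M[R]_(p, n)) (a b : R) :
  (forall k, \sum_j M k j = 0) ->
  (forall i j, (M^T *m M) i j = a * (i == j)%:R + b) ->
  M *m (M^T *m M) = a *: M.
Proof.
move=> rows0 gram; apply/matrixP => k j; rewrite !mxE.
under eq_bigr => i _ do rewrite gram mulrDr mulrCA.
rewrite big_split /= -mulr_sumr -mulr_suml rows0 mul0r addr0; congr (_ * _).
rewrite (bigD1 j) //= eqxx mulr1 big1 ?addr0 // => i /negbTE ->.
by rewrite mulr0.
Qed.

Section NeuralCollapse.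
Variables (R : rcfType) (p N C : nat) (h : 'I_N -> 'I_C -> 'cV[R]_p).
Hypotheses (N_gt0 : (0 < N)%N) (C_gt0 : (0 < C)%N).

Local Notation mu := (class_mean h).
Local Notation muG := (global_mean h).
Local Notation M := (Mdot h).

Let N_neq0 : N%:R != 0 :> R. Proof. by rewrite pnatr_eq0 -lt0n. Qed.
Let C_neq0 : C%:R != 0 :> R. Proof. by rewrite pnatr_eq0 -lt0n. Qed.

Lemma col_Mdot c : col c M = mu c - muG.
Proof. by apply/matrixP => k j; rewrite ord1 !mxE. Qed.

Lemma sum_class_mean_centered : \sum_c (mu c - muG) = 0.
Proof.
rewrite sumrB sumr_const card_ord -scaler_sumr exchange_big /= -scaler_nat scalerA.
by rewrite natrM invfM mulrCA mulfV ?mulr1 ?subrr.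
Qed.

Lemma Mdot_rows_centered k : \sum_c M k c = 0.
Proof.
transitivity ((\sum_c (mu c - muG)) k 0); last by rewrite sum_class_mean_centered mxE.
by rewrite summxE; apply: eq_bigr => c _; rewrite mxE.
Qed.

Lemma SigmaW_eq0_collapse : SigmaW h = 0 -> forall i c, h i c = mu c.
Proof.
move=> /eqP; rewrite scaler_eq0 invr_eq0 natrM mulf_eq0 (negPf N_neq0) (negPf C_neq0) /=.
rewrite pair_bigA /= => /eqP /sum_outer_eq0 /= collapse i c.
by apply/eqP; rewrite -subr_eq0 (collapse (i, c)).
Qed.

Lemma SigmaT_collapse : SigmaW h = 0 -> SigmaT h = C%:R^-1 *: (M *m M^T).
Proof.
move=> /SigmaW_eq0_collapse collapse; rewrite /SigmaT.
under eq_bigr => i _ do under eq_bigr => c _ do rewrite collapse.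
rewrite sumr_const card_ord -scaler_nat scalerA natrM invfM mulrAC mulVf // mul1r.
congr (_ *: _); apply/matrixP => k l; rewrite summxE mxE.
by apply: eq_bigr => c _; rewrite -!col_Mdot !mxE big_ord1 !mxE.
Qed.

Lemma WL_scoreE x c : WL_score h x c = (WL_W h *m (x - muG)) c 0 + C%:R^-1.
Proof.
have bE : WL_b h = C%:R^-1 *: const_mx 1 - WL_W h *m muG by rewrite /WL_b scalemxAl.
have rowE : vdot (row c (WL_W h))^T x = (WL_W h *m x) c 0.
  by rewrite vdotE mxE; apply: eq_bigr => k _; rewrite !mxE.
rewrite /WL_score rowE bE mulmxBr; set Wx := WL_W h *m x; set Wm := WL_W h *m muG.
by rewrite !mxE mulr1 addrCA addrC.
Qed.

Lemma WL_W_collapse (a b : R) : SigmaW h = 0 -> a != 0 ->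
  (forall c c', vdot (mu c - muG) (mu c' - muG) = a * (c == c')%:R + b) ->
  WL_W h = a^-1 *: M^T.
Proof.
move=> /SigmaT_collapse SigmaTE a0 gram.
have MG : M *m (M^T *m M) = a *: M.
  by apply: mulmx_gram_centered Mdot_rows_centered _ => i j; rewrite trmx_mulmxE !col_Mdot.
have BT : (M *m M^T)^T = M *m M^T by rewrite trmx_mul trmxK.
have BB : M *m M^T *m (M *m M^T) = a *: (M *m M^T).
  by rewrite mulmxA -(mulmxA M) MG -scalemxAl.
have MTB : M^T *m (M *m M^T) = a *: M^T.
  by rewrite mulmxA -[M^T *m M]trmxK trmx_mul trmxK -trmx_mul MG linearZ.
rewrite /WL_W SigmaTE (mp_pinvE (is_MP_pinv_scaled_projector BT BB _ a0)) ?invr_eq0 //.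
rewrite -scalemxAr MTB !scalerA; congr (_ *: _); field.
by rewrite C_neq0 a0.
Qed.

Lemma WL_score_collapse (a : R) x c : WL_W h = a^-1 *: M^T ->
  WL_score h x c = a^-1 * vdot (mu c - muG) (x - muG) + C%:R^-1.
Proof.
by move=> WE; rewrite WL_scoreE WE -scalemxAl mxE trmx_mulmxE col_Mdot col_id.
Qed.

End NeuralCollapse.

Theorem theorem2 (R : rcfType) (p N C : nat) (h : 'I_N -> 'I_C -> 'cV[R]_p) :
  (2 <= C)%N -> (1 <= N)%N ->
  SigmaW h = 0 ->
  (forall c : 'I_C, class_mean h c != global_mean h) ->
  (forall c c' : 'I_C,
     vnorm (class_mean h c - global_mean h) = vnorm (class_mean h c' - global_mean h)) ->
  (forall c c' : 'I_C,
     vdot ((vnorm (class_mean h c - global_mean h))^-1 *: (class_mean h c - global_mean h))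
          ((vnorm (class_mean h c' - global_mean h))^-1 *: (class_mean h c' - global_mean h))
     = C%:R / (C%:R - 1) * (c == c')%:R - 1 / (C%:R - 1)) ->
  (frob (WL_W h))^-1 *: (WL_W h)^T = (frob (Mdot h))^-1 *: Mdot h
  /\
  (forall (x : 'cV[R]_p) (c : 'I_C),
     (forall c' : 'I_C, WL_score h x c' <= WL_score h x c) <->
     (forall c' : 'I_C, vnorm (x - class_mean h c) <= vnorm (x - class_mean h c'))).
Proof.
move=> C_ge2 N_gt0 SigmaW0 mu_neq equinorm etf.
have C_gt0 : (0 < C)%N by apply: leq_trans C_ge2.
pose dev c := class_mean h c - global_mean h.
pose r := vdot (dev (Ordinal C_gt0)) (dev (Ordinal C_gt0)).
have r_gt0 : 0 < r by rewrite lt_def vdot_ge0 vdot_eq0 subr_eq0 mu_neq.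
have dev_equinorm c : vdot (dev c) (dev c) = r.
  by rewrite /r /dev -!sqr_vnorm (equinorm c (Ordinal C_gt0)).
have C1_gt0 : 0 < C%:R - 1 :> R by rewrite subr_gt0 ltr1n.
pose a := r * (C%:R / (C%:R - 1)).
have a_gt0 : 0 < a by rewrite mulr_gt0 // divr_gt0 // ltr0n.
have gram c c' : vdot (dev c) (dev c') = a * (c == c')%:R + - (r / (C%:R - 1)).
  have := etf c c'; rewrite (vdot_normalized (equinorm c c')) -/(dev c) -/(dev c').
  rewrite dev_equinorm => etf_cc'.
  by rewrite -[LHS](mulfVK (lt0r_neq0 r_gt0)) etf_cc' /a; ring.
have WE := WL_W_collapse N_gt0 C_gt0 SigmaW0 (lt0r_neq0 a_gt0) gram.
split; first by rewrite WE -frob_tr linearZ /= trmxK frob_normalizeZ ?invr_gt0.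
have score_le x c c' : (WL_score h x c' <= WL_score h x c) =
    (vnorm (x - class_mean h c) <= vnorm (x - class_mean h c')).
  have xE d : x - class_mean h d = (x - global_mean h) - dev d by rewrite opprB addrA subrK.
  rewrite !(WL_score_collapse _ _ WE) lerD2r ler_pM2l ?invr_gt0 // !xE.
  by rewrite ler_vnormB_equinorm // !dev_equinorm.
by move=> x c; split=> le_c c'; [rewrite -score_le | rewrite score_le].
Qed.
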